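(* Let $H$ be a connected non-trivial core with a factorization $H\cong H_1\times\dots\times H_m$ such that $H_i\not\cong K_1^*$ for all $i\in[m]$. Then for every $i\in[m]$, $H_i$ is a connected non-trivial core, and $H_i$ is incomparable with $H_j$ for every $j\in[m]\setminus\{i\}$.
   Context: Graphs are finite, undirected, without parallel edges, loops allowed; $K_1^*$ is the one-vertex graph with a loop. A homomorphism is an edge-preserving vertex map. A core is a graph with no homomorphism to a proper subgraph of itself; it is trivial if isomorphic to $K_1$, $K_1^*$ or $K_2$, non-trivial otherwise. Graphs $G,H$ are incomparable if there is no homomorphism $G\to H$ and none $H\to G$. The direct product $H_1\times H_2$ has vertex set $V(H_1)\times V(H_2)$ with $(x_1,y_1)(x_2,y_2)$ an edge iff $x_1x_2\in E(H_1)$ and $y_1y_2\in E(H_2)$. *)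

From mathcomp Require Import all_boot.
Set Implicit Arguments. Unset Strict Implicit. Unset Printing Implicit Defensive.

(* A finite undirected graph without parallel edges, loops allowed:
   a finite vertex type with a symmetric adjacency relation. *)
Record graph := Graph {
  vtx :> finType;
  adj : rel vtx;
  adj_sym : symmetric adj }.

Definition is_hom (G H : graph) (f : G -> H) : Prop :=
  forall x y : G, adj x y -> adj (f x) (f y).

Definition hom_exists (G H : graph) : Prop := exists f : G -> H, is_hom f.

Definition isomorphic (G H : graph) : Prop :=
  exists f : G -> H, bijective f /\ forall x y : G, adj (f x) (f y) = adj x y.

(* A subgraph of G is given by a vertex set A and a symmetric edge relation e
   contained in adj and supported on A; it is proper unless A is everything
   and e = adj.  A core has no homomorphism to a proper subgraph of itself. *)
Definition is_core (G : graph) : Prop :=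
  forall (A : {set G}) (e : rel G),
    symmetric e ->
    (forall x y, e x y -> [&& adj x y, x \in A & y \in A]) ->
    forall f : G -> G,
      (forall x, f x \in A) ->
      (forall x y, adj x y -> e (f x) (f y)) ->
      A = setT /\ (forall x y, e x y = adj x y).

Definition connected (G : graph) : Prop :=
  (exists x : G, True) /\ forall x y : G, connect (@adj G) x y.

Lemma K1_sym : symmetric (fun _ _ : unit => false). Proof. by []. Qed.
Definition K1 : graph := Graph K1_sym.
Lemma K1s_sym : symmetric (fun _ _ : unit => true). Proof. by []. Qed.
Definition K1star : graph := Graph K1s_sym.
Lemma K2_sym : symmetric (fun x y : bool => x != y).
Proof. by move=> x y; rewrite eq_sym. Qed.
Definition K2 : graph := Graph K2_sym.

Definition trivial_graph (G : graph) : Prop :=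
  isomorphic G K1 \/ isomorphic G K1star \/ isomorphic G K2.

Definition incomparable (G H : graph) : Prop :=
  ~ hom_exists G H /\ ~ hom_exists H G.

Definition prod_adj (m : nat) (Hs : 'I_m -> graph)
  (x y : {dffun forall i : 'I_m, Hs i}) : bool :=
  [forall i, adj (x i) (y i)].

Lemma prod_adj_sym m (Hs : 'I_m -> graph) : symmetric (@prod_adj m Hs).
Proof.
move=> x y; apply/forallP/forallP => H i; by rewrite adj_sym.
Qed.

Definition prod_graph (m : nat) (Hs : 'I_m -> graph) : graph :=
  Graph (@prod_adj_sym m Hs).

From mathcomp Require Import all_boot.
Set Implicit Arguments. Unset Strict Implicit. Unset Printing Implicit Defensive.

(* 1. A finite graph is a core iff every endomorphism is surjective; the
      reverse direction uses that a surjective endomorphism of a finite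
      graph is a bijection that also reflects edges (edge counting).
   2. Isomorphisms transport connectivity, edges and endo-surjectivity, so
      the product P = H_1 x ... x H_m inherits them from H.
   3. Inside P, a homomorphism g : H_i -> H_j yields the endomorphism of P
      replacing the j-th coordinate by g applied to the i-th.  For i <> j
      its image consists of points x with x_j = g (x_i); as it hits the
      point a with a_j replaced by any c, every c equals g (a_i), so H_j
      has a single vertex; since the product has an edge,
      H_j would be K1star.  Hence distinct factors are incomparable.
   4. Replacing one coordinate by an endomorphism of H_i shows H_i is a core;
      projections give connectivity; an edge of P rules out K1, and K2 is
      ruled out either by mapping K2 into another factor or, when m = 1, by
      H itself being isomorphic to the unique factor. *)

Definition endo_surjective (G : graph) : Prop :=
  forall f : G -> G, is_hom f -> forall y, exists x, f x = y.

Lemma surj_injective (T : finType) (f : T -> T) :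
  (forall y, exists x, f x = y) -> injective f.
Proof.
move=> fsurj.
have imT : f @: [set: T] = [set: T].
  by apply/setP => z; rewrite inE; have [w <-] := fsurj z; exact: imset_f.
have /imset_injP finj : #|f @: [set: T]| == #|[set: T]| by rewrite imT.
by move=> x y; apply: finj; rewrite inE.
Qed.

(* An injective endomorphism of a finite graph maps the edge set onto
   itself, hence it also reflects edges. *)
Lemma inj_hom_reflects_adj (G : graph) (f : G -> G) :
  injective f -> is_hom f -> forall x y, adj (f x) (f y) = adj x y.
Proof.
move=> finj fhom x y; apply/idP/idP => [fxy|]; last exact: fhom.
pose E := [set p : G * G | adj p.1 p.2].
pose F := fun p : G * G => (f p.1, f p.2).
have Finj : injective F by move=> [a b] [c d] [/finj -> /finj ->].
have FE : F @: E = E.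
  apply/eqP; rewrite eqEcard card_imset // leqnn andbT.
  by apply/subsetP => _ /imsetP[[a b] + ->]; rewrite !inE; exact: fhom.
have : F (x, y) \in F @: E by rewrite FE inE.
by rewrite mem_imset // inE.
Qed.

(* Cores have only surjective endomorphisms: the image of an endomorphism,
   with the edges it hits, is a subgraph receiving a homomorphism. *)
Lemma core_endo_surjective (G : graph) : is_core G -> endo_surjective G.
Proof.
move=> Gcore f fhom y.
pose A := [set f x | x in G].
pose e := fun a b : G => [&& adj a b, a \in A & b \in A].
have esym : symmetric e.
  by move=> a b; rewrite /e adj_sym [(a \in A) && _]andbC.
have fe : forall x y, adj x y -> e (f x) (f y).
  by move=> a b ab; rewrite /e fhom // !imset_f.
have fA x : f x \in A by exact: imset_f.
have [AT _] := Gcore A e esym (fun x y exy => exy) f fA fe.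
have : y \in A by rewrite AT inE.
by case/imsetP => x _ ->; exists x.
Qed.

Lemma endo_surjective_core (G : graph) : endo_surjective G -> is_core G.
Proof.
move=> Gsurj A e _ esub f fA fe.
have fhom : is_hom f by move=> x y /fe /esub /and3P[].
have fsurj := Gsurj f fhom.
have frefl := inj_hom_reflects_adj (surj_injective fsurj) fhom.
split.
  by apply/setP => y; rewrite inE; have [x <-] := fsurj y; exact: fA.
move=> x y; apply/idP/idP => [/esub/and3P[] //|xy].
have [x' fx'] := fsurj x; have [y' fy'] := fsurj y.
by rewrite -fx' -fy' fe // -frefl fx' fy'.
Qed.

Lemma hom_connect (G K : graph) (f : G -> K) (x y : G) :
  is_hom f -> connect (@adj G) x y -> connect (@adj K) (f x) (f y).
Proof.
move=> fhom /connectP[p pp ->]; apply/connectP; exists (map f p).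
  exact: homo_path pp.
by rewrite last_map.
Qed.

Lemma hom_trans (G K L : graph) :
  hom_exists G K -> hom_exists K L -> hom_exists G L.
Proof. by move=> [f fhom] [g ghom]; exists (g \o f) => x y /fhom /ghom. Qed.

Lemma iso_hom (G K : graph) : isomorphic G K -> hom_exists G K.
Proof. by move=> [f [_ fadj]]; exists f => x y; rewrite fadj. Qed.

Lemma iso_sym (G K : graph) : isomorphic G K -> isomorphic K G.
Proof.
move=> [f [[g fK gK] fadj]]; exists g; split; first by exists f.
by move=> x y; rewrite -fadj !gK.
Qed.

Lemma iso_trans (G K L : graph) :
  isomorphic G K -> isomorphic K L -> isomorphic G L.
Proof.
move=> [f [fbij fadj]] [g [gbij gadj]]; exists (g \o f).
by split; [exact: bij_comp | move=> x y /=; rewrite gadj fadj].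
Qed.

Lemma iso_connected (G K : graph) :
  isomorphic G K -> connected G -> connected K.
Proof.
move=> GK [[x _] Gconn]; have [g [[f gK fK] gadj]] := iso_sym GK.
split; first by exists (f x).
move=> u v; rewrite -(gK u) -(gK v); apply: hom_connect (Gconn _ _).
by move=> a b; rewrite -gadj !fK.
Qed.

Lemma iso_endo_surjective (G K : graph) :
  isomorphic G K -> endo_surjective G -> endo_surjective K.
Proof.
move=> [f [[g fK gK] fadj]] Gsurj h hhom y.
have gadj u v : adj (g u) (g v) = adj u v by rewrite -fadj !gK.
have [x gh] : exists x, g (h (f x)) = g y.
  by apply: Gsurj => a b ab; rewrite gadj hhom // fadj.
by exists (f x); rewrite -[h _]gK gh gK.
Qed.

Lemma iso_edge (G K : graph) :
  isomorphic G K -> (exists a b : G, adj a b) -> exists a b : K, adj a b.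
Proof. by move=> [f [_ fadj]] [a [b ab]]; exists (f a), (f b); rewrite fadj. Qed.

(* A connected graph without edges has a single vertex, i.e. is K1. *)
Lemma connected_nontrivial_edge (G : graph) :
  connected G -> ~ trivial_graph G -> exists a b : G, adj a b.
Proof.
move=> [[x0 _] Gconn] Gnt.
case: (boolP [exists a : G, exists b : G, adj a b]) => [/existsP[a /existsP[b ab]]|N].
  by exists a, b.
have noedge (a b : G) : adj a b = false.
  by apply/negbTE; apply: contra N => ab; apply/existsP; exists a; apply/existsP; exists b.
have single (a : G) : a = x0.
  by have /connectP[[|c p] //=] := Gconn x0 a; rewrite noedge.
exfalso; apply: Gnt; left; exists (fun _ => tt); split; last by move=> a b; rewrite noedge.
by exists (fun _ => x0) => [a|[]] //; rewrite -single.
Qed.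

Lemma single_vertex_K1star (G : graph) (a b : G) :
  adj a b -> (forall c d : G, c = d) -> isomorphic G K1star.
Proof.
move=> ab single; exists (fun _ => tt); split.
  by exists (fun _ => a) => [x|[]] //; exact: single.
by move=> x y; rewrite (single x a) (single y b) ab.
Qed.

Lemma K2_hom (G : graph) (a b : G) : adj a b -> hom_exists K2 G.
Proof.
move=> ab; exists (fun x : bool => if x then a else b).
by case=> [] [] //= _; rewrite adj_sym.
Qed.

Lemma edge_not_trivial (G : graph) (a b : G) :
  adj a b -> ~ isomorphic G K1star -> ~ isomorphic G K2 -> ~ trivial_graph G.
Proof.
move=> ab notK1s notK2 [[f [_ fadj]]|[//|//]].
by have := fadj a b; rewrite ab.
Qed.

Section Product.
Variables (m : nat) (Hs : 'I_m -> graph).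
Notation P := (prod_graph Hs).

(* The point x of P with its j-th coordinate replaced by c. *)
Definition upd (x : P) (j : 'I_m) (c : Hs j) : P :=
  [ffun k => match j =P k with
             | ReflectT e => eq_rect j (fun k => vtx (Hs k)) c k e
             | ReflectF _ => x k end].

Lemma upd_eq (x : P) (j : 'I_m) (c : Hs j) : upd x c j = c.
Proof. by rewrite /upd ffunE; case: (j =P j) => // e; rewrite (eq_axiomK e). Qed.

Lemma upd_neq (x : P) (j k : 'I_m) (c : Hs j) : j != k -> upd x c k = x k.
Proof. by move=> njk; rewrite /upd ffunE; case: (j =P k) => // e; rewrite e eqxx in njk. Qed.

Lemma prod_adjE (x y : P) : adj x y = [forall i, adj (x i) (y i)].
Proof. by []. Qed.

Lemma proj_hom (i : 'I_m) : is_hom (fun x : P => x i).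
Proof. by move=> x y /forallP. Qed.

Lemma lift_hom (i j : 'I_m) (g : Hs i -> Hs j) :
  is_hom g -> is_hom (fun x : P => upd x (g (x i))).
Proof.
move=> ghom x y /forallP xy; apply/forallP => k.
have [<-|njk] := eqVneq j k; last by rewrite !upd_neq.
by rewrite !upd_eq; exact: ghom (xy i).
Qed.

Lemma factor_connected (i : 'I_m) : connected P -> connected (Hs i).
Proof.
move=> [[a _] Pconn]; split; first by exists (a i).
move=> x y; have := hom_connect (proj_hom i) (Pconn (upd a x) (upd a y)).
by rewrite !upd_eq.
Qed.

Lemma factor_endo_surjective (a : P) (i : 'I_m) :
  endo_surjective P -> endo_surjective (Hs i).
Proof.
move=> Psurj f fhom y; have [x fx] := Psurj _ (lift_hom fhom) (upd a y).
by exists (x i); have := congr1 (fun z : P => z i) fx; rewrite /= !upd_eq.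
Qed.

Lemma factor_hom_collapse (a : P) (i j : 'I_m) :
  endo_surjective P -> i != j -> hom_exists (Hs i) (Hs j) ->
  forall c d : Hs j, c = d.
Proof.
move=> Psurj nij [g ghom].
suff collapse c : c = g (a i) by move=> c d; rewrite (collapse c) (collapse d).
have [y /ffunP yE] := Psurj _ (lift_hom ghom) (upd a c).
have := yE j; have := yE i.
by rewrite !upd_eq !upd_neq 1?eq_sym // => -> <-.
Qed.

Lemma prod_single_iso (a : P) (i : 'I_m) :
  (forall k, k = i) -> isomorphic P (Hs i).
Proof.
move=> only_i; exists (fun x : P => x i); split.
  exists (fun c => upd a c) => [x|c]; last by rewrite upd_eq.
  by apply/ffunP => k; rewrite (only_i k) upd_eq.
move=> x y; rewrite prod_adjE; apply/idP/forallP => [xy k|/(_ i) //].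
by rewrite (only_i k).
Qed.

End Product.

Theorem mainTheorem11 (H : graph) (m : nat) (Hs : 'I_m -> graph) :
  connected H -> is_core H -> ~ trivial_graph H ->
  isomorphic H (prod_graph Hs) ->
  (forall i, ~ isomorphic (Hs i) K1star) ->
  forall i : 'I_m,
    (connected (Hs i) /\ is_core (Hs i) /\ ~ trivial_graph (Hs i)) /\
    (forall j : 'I_m, j != i -> incomparable (Hs i) (Hs j)).
Proof.
move=> Hconn Hcore Hnt Hiso notK1s.
have Pconn := iso_connected Hiso Hconn.
have Psurj := iso_endo_surjective Hiso (core_endo_surjective Hcore).
have [a [b /forallP edge]] := iso_edge Hiso (connected_nontrivial_edge Hconn Hnt).
have noHom j k : j != k -> ~ hom_exists (Hs j) (Hs k).
  move=> njk hjk; apply: (notK1s k).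
  exact: single_vertex_K1star (edge k) (factor_hom_collapse a Psurj njk hjk).
move=> i; split; last by move=> j nji; split; apply: noHom; rewrite // eq_sym.
split; first exact: factor_connected Pconn.
split; first exact: endo_surjective_core (factor_endo_surjective a Psurj).
apply: edge_not_trivial (edge i) (notK1s i) _ => K2i.
case: (pickP (fun j => j != i)) => [j /= nji|no_other].
  apply: (noHom i j); first by rewrite eq_sym.
  exact: hom_trans (iso_hom K2i) (K2_hom (edge j)).
apply: Hnt; right; right; apply: iso_trans Hiso (iso_trans (prod_single_iso a _) K2i).
by move=> k; have /negbFE/eqP := no_other k.
Qed.
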